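(* Let $H$ be a $(B,C)$-graph and let $\mu(H)$ denote the number of minor faces of $H$. Then $\mu(H) \geq |V(H)| - |V(C)| + 2$ (equivalently, $\mu(H)\ge |B|+2$).
   Context: Let $C$ be a cycle and $B$ a finite set disjoint from $V(C)$. A plane graph $H$ (i.e. a planar graph together with a fixed embedding in the plane) is called a $(B,C)$-graph if $V(H)=B\cup V(C)$, $C$ is a subgraph of $H$ that is an induced subgraph of $H$, the set $B$ is independent in $H$, and every vertex of $B$ has degree exactly $3$ in $H$. The vertices of $B$ are called outer vertices. A face of $H$ is called minor if it is incident with at most one outer vertex, and major otherwise. *)

(* Plane graphs are represented combinatorially by
   rotation systems (combinatorial maps) of genus 0. *)
From mathcomp Require Import all_boot.
Set Implicit Arguments. Unset Strict Implicit. Unset Printing Implicit Defensive.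

Section PlaneGraphs.
Variables (D V : finType).

Definition orbit_set (g : D -> D) (x : D) : {set D} := [set y | fconnect g x y].
Definition orbits (g : D -> D) : {set {set D}} := [set orbit_set g x | x : D].

(* e : edge involution (the other half of the edge),
   n : rotation around a vertex (node permutation),
   faces are the orbits of the face permutation n \o e. *)
Definition face_perm (e n : D -> D) : D -> D := fun x => n (e x).

Definition glink (e n : D -> D) : rel D := [rel x y | (y == e x) || (y == n x)].

(* a connected combinatorial map of genus 0 (Euler's formula V - E + F = 2),
   i.e. a connected plane embedding *)
Definition plane_map (e n : D -> D) : Prop :=
  [/\ involutive e, (forall x, e x != x), injective n,
      (forall x y, connect (glink e n) x y) &
      #|orbits n| + #|orbits (face_perm e n)| = #|orbits e| + 2].

(* vx labels each dart by its vertex: vertices = node orbits *)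
Definition vertex_labelling (n : D -> D) (vx : D -> V) : Prop :=
  (forall x y, vx x = vx y <-> fconnect n x y) /\ (forall u, exists x, vx x = u).

(* the underlying graph is simple: no loops, no multiple edges *)
Definition simple_map (e : D -> D) (vx : D -> V) : Prop :=
  (forall x, vx (e x) != vx x) /\
  (forall x y, vx x = vx y -> vx (e x) = vx (e y) -> x = y).

Definition adj (e : D -> D) (vx : D -> V) (u w : V) : Prop :=
  exists x, vx x = u /\ vx (e x) = w.

(* number of darts at u = degree of u (graph is simple) *)
Definition degree (vx : D -> V) (u : V) : nat := #|[set x | vx x == u]|.

(* (B,C)-graph, with the cycle C given as the cyclic sequence c *)
Definition BC_graph (e n : D -> D) (vx : D -> V) (B : {set V}) (c : seq V) : Prop :=
  [/\ plane_map e n, vertex_labelling n vx, simple_map e vx,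
      [/\ 3 <= size c, uniq c & forall u, u \in c -> adj e vx u (next c u)] &
      [/\ (* V(H) = B \cup V(C), disjoint *)
          (forall u, (u \in B) = (u \notin c)),
          (* C is induced *)
          (forall u w, u \in c -> w \in c -> adj e vx u w ->
                       w = next c u \/ u = next c w),
          (forall u w, u \in B -> w \in B -> ~ adj e vx u w) &
          (forall u, u \in B -> degree vx u = 3)]].

Definition outer_on_face (vx : D -> V) (B : {set V}) (F : {set D}) : {set V} :=
  [set u in B | [exists x in F, vx x == u]].

Definition minor_face (vx : D -> V) (B : {set V}) (F : {set D}) : bool :=
  #|outer_on_face vx B F| <= 1.

Definition mu (e n : D -> D) (vx : D -> V) (B : {set V}) : nat :=
  #|[set F in orbits (face_perm e n) | minor_face vx B F]|.

End PlaneGraphs.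

From mathcomp Require Import all_boot.
From mathcomp Require Import zify.
Set Implicit Arguments. Unset Strict Implicit. Unset Printing Implicit Defensive.

(* Each outer vertex carries 3 darts and each of its 3 edges
   ends on C, while each vertex of C carries at least its two cycle darts, so
   there are at least 3|B| + |C| edges; Euler's formula then gives at least
   2|B| + 2 faces.  A face meeting no outer vertex walks along C in a fixed
   direction (C is induced and its vertices have degree at least 2), so there
   are at most 2 such faces.  Charging every face with its outer darts, plus
   one unit if it has none, plus one unit if it is minor, gives at least 2 per
   face, while the total charge is 3|B| + 2 + mu(H); hence mu(H) >= |B| + 2. *)

Lemma iter_of_fconnect (T : finType) (f : T -> T) x y :
  fconnect f x y -> exists i, y = iter i f x.
Proof. by rewrite fconnect_orbit => /trajectP[i _ ->]; exists i. Qed.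

Lemma cardsU_disjoint (T : finType) (A B : {set T}) :
  (forall x, x \in A -> x \notin B) -> #|A :|: B| = #|A| + #|B|.
Proof.
move=> AB; rewrite cardsU; suff -> : A :&: B = set0 by rewrite cards0 subn0.
by apply/setP => x; rewrite !inE; apply/negbTE/andP => -[/AB/negP].
Qed.

Lemma sum_nat_bool_card (T : finType) (A : {set T}) (P : pred T) :
  \sum_(i in A) (P i : nat) = #|[set i in A | P i]|.
Proof.
rewrite -sum1_card big_mkcond [RHS]big_mkcond; apply: eq_bigr => i _.
by rewrite inE; case: (i \in A); case: (P i).
Qed.

Section Orbits.
Variables (T : finType) (g : T -> T).

Lemma orbit_set_id x : x \in orbit_set g x.
Proof. by rewrite inE connect0. Qed.

Lemma orbits_step A x : A \in orbits g -> x \in A -> g x \in A.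
Proof.
case/imsetP=> y _ ->; rewrite !inE => yx.
by apply: connect_trans yx (fconnect1 g x).
Qed.

Hypothesis g_inj : injective g.

Lemma orbits_orbit_set A x : A \in orbits g -> x \in A -> A = orbit_set g x.
Proof.
case/imsetP=> y _ ->; rewrite inE => yx.
apply/setP => z; rewrite !inE; apply/idP/idP => [yz|]; last exact: connect_trans.
by apply: connect_trans yz; rewrite fconnect_sym.
Qed.

Lemma sum_card_orbitsI S : \sum_(A in orbits g) #|A :&: S| = #|S|.
Proof.
rewrite -sum1_card (partition_big (orbit_set g) (mem (orbits g))) /=;
  last by move=> x _; apply: imset_f.
apply: eq_bigr => A gA; rewrite -sum1_card; apply: eq_bigl => x.
rewrite !inE andbC; congr (_ && _); apply/idP/eqP => [Ax|<-].
  by rewrite -(orbits_orbit_set gA Ax).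
exact: orbit_set_id.
Qed.

End Orbits.

Lemma card_le_double_orbits (T : finType) (e : T -> T) :
  involutive e -> #|T| <= 2 * #|orbits e|.
Proof.
move=> e_invol; rewrite -cardsT -(sum_card_orbitsI (inv_inj e_invol)).
rewrite mulnC -sum_nat_const; apply: leq_sum => A /imsetP[x _ ->]; rewrite setIT.
apply: leq_trans (_ : #|[set x; e x]| <= 2); last by rewrite cards2; case: (_ != _).
apply: subset_leq_card; apply/subsetP => y; rewrite !inE => /iter_of_fconnect[i ->].
elim: i => [|i]; first by rewrite eqxx.
by rewrite iterS => /orP[] /eqP ->; rewrite ?e_invol eqxx ?orbT.
Qed.

Lemma card_orbits_le_labels (D V : finType) (n : D -> D) (vx : D -> V) :
  vertex_labelling n vx -> #|orbits n| <= #|V|.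
Proof.
case=> lab _; rewrite -cardsT.
apply: leq_trans (leq_imset_card (fun u => [set y | vx y == u]) _).
apply: subset_leq_card; apply/subsetP => _ /imsetP[x _ ->].
apply/imsetP; exists (vx x) => //; apply/setP => y; rewrite !inE.
by apply/idP/eqP => [/(lab _ _)|/esym/(lab _ _)].
Qed.

Lemma next_neq_prev (T : eqType) (c : seq T) u :
  uniq c -> 3 <= size c -> u \in c -> next c u != prev c u.
Proof.
move=> c_uniq c_size /rot_to[i s c_rot].
suff : next c (next c u) != u by apply: contraNneq => ->; rewrite next_prev.
rewrite -!(next_rot i c_uniq) c_rot.
have : uniq (u :: s) by rewrite -c_rot rot_uniq.
have : 2 <= size s by rewrite -(size_rot i c) c_rot /= in c_size.
case: s {c_rot} => [|a [|b s]] //= _.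
rewrite !inE !negb_or => /and3P[/and3P[ua ub _] _ _].
by rewrite eqxx [a == u]eq_sym (negbTE ua) eqxx eq_sym.
Qed.

Section BCGraph.
Variables (D V : finType) (e n : D -> D) (vx : D -> V) (B : {set V}) (c : seq V).
Hypothesis BC : BC_graph e n vx B c.

Local Notation fp := (face_perm e n).
Local Notation faces := (orbits fp).
Local Notation cyc b := (if b then c else rev c).

Let e_invol : involutive e. Proof. by case: BC => [[]]. Qed.
Let n_inj : injective n. Proof. by case: BC => [[]]. Qed.
Let euler : #|orbits n| + #|faces| = #|orbits e| + 2.
Proof. by case: BC => [[]]. Qed.
Let labelling : vertex_labelling n vx. Proof. by case: BC. Qed.
Let same_ends x y : vx x = vx y -> vx (e x) = vx (e y) -> x = y.
Proof. by case: BC => _ _ [_ ends] _ _; apply: ends. Qed.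
Let c_size : 3 <= size c. Proof. by case: BC => _ _ _ []. Qed.
Let c_uniq : uniq c. Proof. by case: BC => _ _ _ []. Qed.
Let c_adj u : u \in c -> adj e vx u (next c u).
Proof. by case: BC => _ _ _ [_ _ adjc] _; apply: adjc. Qed.
Let B_notin_c u : (u \in B) = (u \notin c).
Proof. by case: BC => _ _ _ _ [Bc _ _ _]; apply: Bc. Qed.
Let c_induced u w : u \in c -> w \in c -> adj e vx u w ->
  w = next c u \/ u = next c w.
Proof. by case: BC => _ _ _ _ [_ induced _ _]; apply: induced. Qed.
Let B_indep u w : u \in B -> w \in B -> ~ adj e vx u w.
Proof. by case: BC => _ _ _ _ [_ _ indep _]; apply: indep. Qed.
Let B_degree u : u \in B -> degree vx u = 3.
Proof. by case: BC => _ _ _ _ [_ _ _ deg3]; apply: deg3. Qed.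

Let e_inj : injective e := inv_inj e_invol.
Let card_c : #|c| = size c. Proof. exact/card_uniqP. Qed.
Let fp_inj : injective fp. Proof. by move=> x y /n_inj/e_inj. Qed.

Lemma vx_node x : vx (n x) = vx x.
Proof. by symmetry; apply/(labelling.1 _ _).2/fconnect1. Qed.

Lemma vx_face_perm x : vx (fp x) = vx (e x).
Proof. exact: vx_node. Qed.

Lemma card_vertices : #|B| + size c = #|V|.
Proof.
rewrite -card_c -(cardC (mem c)) addnC; congr (_ + _).
by apply: eq_card => u; rewrite B_notin_c.
Qed.

Definition outer_darts := [set x | vx x \in B].

Lemma card_outer_darts : #|outer_darts| = 3 * #|B|.
Proof.
rewrite -sum1_card (partition_big vx (mem B)) /=; last by move=> x; rewrite inE.
rewrite mulnC -sum_nat_const; apply: eq_bigr => u uB.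
rewrite -(B_degree uB) /degree -sum1_card; apply: eq_bigl => x.
by rewrite !inE; case: (vx x =P u) => [->|]; rewrite ?uB ?andbF.
Qed.

Lemma cyc_uniq b : uniq (cyc b).
Proof. by case: b; rewrite ?rev_uniq. Qed.

Lemma mem_cyc b u : (u \in cyc b) = (u \in c).
Proof. by case: b; rewrite ?mem_rev. Qed.

Lemma cycle_edge b x : vx x \in c -> vx (e x) \in c ->
  vx (e x) = next (cyc b) (vx x) \/ vx (e x) = prev (cyc b) (vx x).
Proof.
move=> xc exc; have /c_induced : adj e vx (vx x) (vx (e x)) by exists x.
case/(_ xc exc) => [->|xv]; first by case: b; [left | right; rewrite prev_rev].
have -> : vx (e x) = prev c (vx x) by rewrite xv prev_next.
by case: b; [right | left; rewrite next_rev].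
Qed.

Lemma cycle_dart b u : u \in c -> exists x, vx x = u /\ vx (e x) = next (cyc b) u.
Proof.
case: b => uc; first exact: c_adj.
have [x [xu xv]] : adj e vx (prev c u) (next c (prev c u)) by apply: c_adj; rewrite mem_prev.
exists (e x); rewrite e_invol xu next_rev //.
by rewrite (next_prev c_uniq) in xv.
Qed.

Definition step_darts b := [set x | vx x \in c & vx (e x) == next (cyc b) (vx x)].

Lemma card_step_darts b : size c <= #|step_darts b|.
Proof.
rewrite -card_c -cardsE.
apply: leq_trans (leq_imset_card vx _); apply: subset_leq_card.
apply/subsetP => u uc; have [x [xu xv]] := cycle_dart b uc.
by apply/imsetP; exists x; rewrite ?inE ?xu ?xv ?uc ?eqxx.
Qed.

Lemma card_darts : 6 * #|B| + 2 * size c <= #|D|.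
Proof.
have step_c b x : x \in step_darts b -> vx x \in c.
  by rewrite inE => /andP[].
have step_ec b x : x \in step_darts b -> vx (e x) \in c.
  by rewrite inE => /andP[xc /eqP ->]; rewrite -(mem_cyc b) mem_next mem_cyc.
have out_e x : x \in e @: outer_darts -> vx (e x) \in B.
  by case/imsetP=> y; rewrite inE => yB ->; rewrite e_invol.
have dis_steps x : x \in step_darts true -> x \notin step_darts false.
  rewrite !inE /= => /andP[xc /eqP ->]; rewrite xc next_rev //=.
  exact: next_neq_prev.
have dis_out_e x : x \in e @: outer_darts -> x \notin step_darts true :|: step_darts false.
  move/out_e; rewrite B_notin_c => exc.
  by apply/setUP => -[] /step_ec; apply/negP.
have dis_out x : x \in outer_darts ->
    x \notin e @: outer_darts :|: (step_darts true :|: step_darts false).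
  rewrite inE B_notin_c => xc; apply/setUP => -[|/setUP[] /step_c]; [|exact/negP..].
  case/imsetP=> y; rewrite inE => yB xe.
  by apply: (B_indep yB (_ : vx (e y) \in B)); [rewrite B_notin_c -xe | exists y].
have := subset_leq_card (subsetT
  (outer_darts :|: (e @: outer_darts :|: (step_darts true :|: step_darts false)))).
rewrite cardsT !cardsU_disjoint // card_imset // card_outer_darts.
by have := card_step_darts true; have := card_step_darts false; lia.
Qed.

Lemma node_moves x : vx x \in c -> n x != x.
Proof.
move=> xc; apply/eqP => nx.
have single y : vx y = vx x -> y = x.
  move/esym/(labelling.1 _ _)/iter_of_fconnect => [i ->]; exact: iter_fix.
have [x1 [/single -> x1v]] := cycle_dart true xc.
have [x0 [/single -> x0v]] := cycle_dart false xc.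
move: (next_neq_prev c_uniq c_size xc).
by rewrite -(next_rev c_uniq) -x1v -x0v eqxx.
Qed.

Lemma face_step b x : vx x \in c -> vx (e x) = next (cyc b) (vx x) ->
  vx (e (fp x)) \in c -> vx (e (fp x)) = next (cyc b) (vx (fp x)).
Proof.
move=> xc xv efc.
have exc : vx (e x) \in c by rewrite xv -(mem_cyc b) mem_next mem_cyc.
have fxc : vx (fp x) \in c by rewrite vx_face_perm.
case: (cycle_edge b fxc efc) => // back.
have fx_ex : fp x = e x.
  apply: same_ends; first exact: vx_face_perm.
  by rewrite back e_invol vx_face_perm xv (prev_next (cyc_uniq b)).
by move: (node_moves exc); rewrite -[n (e x)]/(fp x) fx_ex eqxx.
Qed.

Section InnerFace.
Variable F : {set D}.
Hypotheses (F_face : F \in faces) (F_inner : F :&: outer_darts = set0).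

Lemma inner_face_vertex x : x \in F -> vx x \in c.
Proof.
move=> xF; rewrite -[_ \in c]negbK -B_notin_c; apply/negP => xB.
have : x \in F :&: outer_darts by rewrite !inE xF xB.
by rewrite F_inner inE.
Qed.

Lemma inner_face_edge x : x \in F -> vx (e x) \in c.
Proof.
by move=> xF; rewrite -vx_face_perm; apply/inner_face_vertex/orbits_step.
Qed.

Lemma inner_face_walk b i x : x \in F -> vx (e x) = next (cyc b) (vx x) ->
  exists2 y, y \in F & vx y = iter i (next (cyc b)) (vx x) /\
                       vx (e y) = next (cyc b) (vx y).
Proof.
elim: i x => [|i IH] x xF xv; first by exists x.
have fxF : fp x \in F by apply: orbits_step.
have [y yF [yv eyv]] := IH _ fxF (face_step (inner_face_vertex xF) xv
                                             (inner_face_edge fxF)).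
by exists y => //; rewrite iterSr -xv -vx_face_perm.
Qed.

Lemma inner_face_through u : u \in c ->
  exists b, exists2 y, y \in F & vx y = u /\ vx (e y) = next (cyc b) u.
Proof.
move=> uc; have [z zF] : exists z, z \in F.
  by case/imsetP: F_face => z _ ->; exists z; apply: orbit_set_id.
have [b zv] : exists b, vx (e z) = next (cyc b) (vx z).
  case: (cycle_edge true (inner_face_vertex zF) (inner_face_edge zF)) => zv.
    by exists true.
  by exists false; rewrite next_rev.
have : fconnect (next (cyc b)) (vx z) u.
  by rewrite (fconnect_cycle (cycle_next (cyc_uniq b))) mem_cyc ?inner_face_vertex.
case/iter_of_fconnect=> i ->; exists b.
by have [y yF [yv eyv]] := inner_face_walk i zF zv; exists y => //; rewrite -yv.
Qed.

End InnerFace.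

Lemma card_inner_faces : #|[set F in faces | F :&: outer_darts == set0]| <= 2.
Proof.
have [u uc] : exists u, u \in c by case: c c_size => [|u s] //; exists u; apply: mem_head.
have [x1 [x1u x1v]] := cycle_dart true uc.
have [x0 [x0u x0v]] := cycle_dart false uc.
apply: leq_trans (_ : #|[set orbit_set fp x1; orbit_set fp x0]| <= 2);
  last by rewrite cards2; case: (_ != _).
apply: subset_leq_card; apply/subsetP => F; rewrite inE => /andP[Fface /eqP Finner].
have [b [y yF [yu yv]]] := inner_face_through Fface Finner uc.
rewrite (orbits_orbit_set fp_inj Fface yF) !inE.
case: b yv => yv; [have -> : y = x1 | have -> : y = x0]; rewrite ?eqxx ?orbT //;
  by apply: same_ends; congruence.
Qed.

Lemma outer_on_face_le F : #|outer_on_face vx B F| <= #|F :&: outer_darts|.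
Proof.
apply: leq_trans (subset_leq_card _) (leq_imset_card vx _).
apply/subsetP => u; rewrite inE => /andP[uB /existsP[x /andP[xF /eqP xu]]].
by apply/imsetP; exists x; rewrite // !inE xF xu uB.
Qed.

Lemma face_charge F :
  2 <= #|F :&: outer_darts| + (F :&: outer_darts == set0) + minor_face vx B F.
Proof.
have := outer_on_face_le F; rewrite /minor_face.
case: (F :&: outer_darts =P set0) => [->|/eqP]; first by rewrite cards0 leqn0 => /eqP ->.
by rewrite -card_gt0 /=; case: leqP => //=; lia.
Qed.

Lemma card_faces : 2 * #|B| + 2 <= #|faces|.
Proof.
have := card_orbits_le_labels labelling; have := card_le_double_orbits e_invol.
have := card_darts; have := card_vertices; lia.
Qed.

Lemma mu_lower_bound : #|B| + 2 <= mu e n vx B.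
Proof.
have charge : \sum_(F in faces) 2 <= \sum_(F in faces)
    (#|F :&: outer_darts| + (F :&: outer_darts == set0) + minor_face vx B F).
  by apply: leq_sum => F _; apply: face_charge.
have inner : \sum_(F in faces) (F :&: outer_darts == set0) <= 2.
  by rewrite sum_nat_bool_card; apply: card_inner_faces.
have minor : \sum_(F in faces) minor_face vx B F = mu e n vx B.
  exact: sum_nat_bool_card.
rewrite !big_split /= sum_card_orbitsI // minor sum_nat_const in charge.
have := leq_trans charge (leq_add (leq_add (leqnn _) inner) (leqnn _)).
rewrite card_outer_darts; have := card_faces; set f := #|faces|; lia.
Qed.

End BCGraph.

Theorem mainTheorem2 (D V : finType) (e n : D -> D) (vx : D -> V)
    (B : {set V}) (c : seq V) :
  BC_graph e n vx B c ->
  #|V| - size c + 2 <= mu e n vx B.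
Proof.
move=> BC; rewrite -(card_vertices BC) addnK.
exact: mu_lower_bound BC.
Qed.
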